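(* Let $d\in\mathbb{N}$, $r\in\mathbb{N}$ with $r\ge2$, set $\delta=r^{-7/2}$, $\sigma=\sqrt{\log(1/\delta)}/r$, $\gamma=\sqrt{\tfrac52\log r}$, $R=1+\gamma(2+\sqrt2)\sqrt d\,\sigma$, $b=(R+1)^2/(4\sigma^2)$, and let $\mathcal K_r$ and $\mathcal K_G^{\sigma,R}$ be as in the context. For any $k\in\mathbb{N}$, \[ \|\mathcal K_rT_k-\mathcal K_G^{\sigma,R}T_k\|_\infty\le 2R\,\frac{3\delta}{\sqrt{2\pi}\sigma}\max_{y\in[-R,R]}|T_k(y)|. \] In particular, if $R\le1+\frac{1}{10k^2}$, then $\|\mathcal K_rT_k-\mathcal K_G^{\sigma,R}T_k\|_\infty\le\frac{24\delta}{\sqrt{2\pi}\sigma}$.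
   Context: $T_k(x)=\cos(k\arccos x)$ (extended as a polynomial to $\mathbb{R}$). $\|g\|_\infty=\sup_{x\in[-1,1]}|g(x)|$. $s_{b,\delta}$ is a univariate polynomial of degree $\lceil\sqrt{2\theta\log(4/\delta)}\rceil$, $\theta=\lceil\max\{\tfrac12be^2,\log(2/\delta)\}\rceil$, with $|e^{-t}-s_{b,\delta}(t)|\le\delta$ for all $t\in[0,b]$. $K_r(x,y)=\frac1{\sqrt{2\pi}\sigma}s_{b,\delta}^2\!\left(\frac{(x-y)^2}{4\sigma^2}\right)$, $\mathcal K_r(f)(x)=\int_{-R}^RK_r(x,y)f(y)\,dy$. The Gaussian kernel is $K_G^\sigma(x,y)=\frac1{\sqrt{2\pi}\sigma}\exp\!\left(-\frac{(x-y)^2}{2\sigma^2}\right)$ and the truncated Gauss–Weierstrass operator is $\mathcal K_G^{\sigma,R}(f)(x)=\int_{-R}^RK_G^\sigma(x,y)f(y)\,dy$. $\log$ is the natural logarithm. *)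

From Stdlib Require Import Reals Lra ZArith.
From Coquelicot Require Import Coquelicot.
Open Scope R_scope.

(* Chebyshev polynomials of the first kind, as polynomial functions on R:
   T_0 = 1, T_1 = x, T_{k+2} = 2 x T_{k+1} - T_k.  This is the polynomial
   extension of cos(k arccos x). *)
Fixpoint cheb_pair (k : nat) (x : R) : R * R :=
  match k with
  | O => (1, x)
  | S k' => let (a, b) := cheb_pair k' x in (b, 2 * x * b - a)
  end.
Definition cheb (k : nat) (x : R) : R := fst (cheb_pair k x).

(* ceiling, via Stdlib's up: up y is the integer with y < up y <= y + 1 *)
Definition ceilZ (x : R) : Z := (- (up (- x) - 1))%Z.

(* supremum of |f| over [a, b] (for continuous f on a compact interval this is the max) *)
Definition sup_abs_on (f : R -> R) (a b : R) : R :=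
  real (Lub_Rbar (fun z => exists y, a <= y <= b /\ z = Rabs (f y))).

Definition supnorm (g : R -> R) : R := sup_abs_on g (-1) 1.

Definition is_poly_of_degree (s : R -> R) (n : nat) : Prop :=
  exists a : nat -> R, a n <> 0 /\ forall t, s t = sum_f_R0 (fun i => a i * t ^ i) n.

Definition theta (b δ : R) : R := IZR (ceilZ (Rmax (b * exp 2 / 2) (ln (2 / δ)))).
Definition sdeg (b δ : R) : nat := Z.to_nat (ceilZ (sqrt (2 * theta b δ * ln (4 / δ)))).

Definition is_s (b δ : R) (s : R -> R) : Prop :=
  is_poly_of_degree s (sdeg b δ) /\
  forall t, 0 <= t <= b -> Rabs (exp (- t) - s t) <= δ.

Definition delt (r : nat) : R := Rpower (INR r) (- (7 / 2)).
Definition sigm (r : nat) : R := sqrt (ln (1 / delt r)) / INR r.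
Definition gam (r : nat) : R := sqrt (5 / 2 * ln (INR r)).
Definition Rbd (d r : nat) : R := 1 + gam r * (2 + sqrt 2) * sqrt (INR d) * sigm r.
Definition bpar (d r : nat) : R := (Rbd d r + 1) ^ 2 / (4 * sigm r ^ 2).

Definition Kr (σ : R) (s : R -> R) (x y : R) : R :=
  1 / (sqrt (2 * PI) * σ) * (s ((x - y) ^ 2 / (4 * σ ^ 2))) ^ 2.
Definition KG (σ : R) (x y : R) : R :=
  1 / (sqrt (2 * PI) * σ) * exp (- ((x - y) ^ 2 / (2 * σ ^ 2))).
Definition opKr (σ : R) (s : R -> R) (Rb : R) (f : R -> R) (x : R) : R :=
  RInt (fun y => Kr σ s x y * f y) (- Rb) Rb.
Definition opKG (σ Rb : R) (f : R -> R) (x : R) : R :=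
  RInt (fun y => KG σ x y * f y) (- Rb) Rb.

(* For x in [-1, 1] and y in [-R, R], t = (x - y)^2 / (4 sigma^2) lies in [0, b],
   and K_G = c e^{-2t}, K_r = c s(t)^2 with c = 1 / (sqrt (2 pi) sigma).  Since
   |s(t) - e^{-t}| <= delta <= 1 and e^{-t} <= 1, the kernels differ by at most
   3 c delta, and integrating over [-R, R] against any continuous f gives the first
   bound.  For the second, |T_k| <= 1 on (-1, 1) by the identity
   T_k^2 - 2 y T_k T_{k+1} + T_{k+1}^2 = 1 - y^2, and along the three-term
   recurrence T_k(1 + e) <= 1 + 2k(k+1)e <= 2 when k^2 e <= 1/10; by parity
   |T_k| <= 2 on [-R, R]. *)

From Stdlib Require Import Reals Lra Lia.
From Coquelicot Require Import Coquelicot.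
Open Scope R_scope.

Lemma cheb_pair_fst_S k x : fst (cheb_pair (S k) x) = snd (cheb_pair k x).
Proof. simpl. destruct (cheb_pair k x); reflexivity. Qed.

Lemma cheb_pair_snd_S k x :
  snd (cheb_pair (S k) x) = 2 * x * snd (cheb_pair k x) - fst (cheb_pair k x).
Proof. simpl. destruct (cheb_pair k x); reflexivity. Qed.

Lemma cheb_pair_continuous k x :
  continuous (fun y => fst (cheb_pair k y)) x /\
  continuous (fun y => snd (cheb_pair k y)) x.
Proof.
  induction k as [|k [IH1 IH2]]; simpl.
  - split; [apply continuous_const | apply continuous_id].
  - split.
    + eapply continuous_ext; [intros; symmetry; apply cheb_pair_fst_S | exact IH2].
    + eapply continuous_ext; [intros; symmetry; apply cheb_pair_snd_S|].
      apply (continuous_minus (fun y => 2 * y * snd (cheb_pair k y))); [|exact IH1].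
      apply (continuous_mult (fun y => 2 * y)); [|exact IH2].
      apply (continuous_mult (fun _ => 2)); [apply continuous_const | apply continuous_id].
Qed.

Lemma cheb_continuous k x : continuous (cheb k) x.
Proof. exact (proj1 (cheb_pair_continuous k x)). Qed.

Lemma cheb_pair_pell k y :
  let a := fst (cheb_pair k y) in let b := snd (cheb_pair k y) in
  a * a - 2 * y * a * b + b * b = 1 - y * y.
Proof.
  induction k as [|k IH]; cbv zeta in *; [simpl; ring|].
  rewrite cheb_pair_fst_S, cheb_pair_snd_S, <- IH. ring.
Qed.

Lemma cheb_abs_le1 k y : -1 < y < 1 -> Rabs (cheb k y) <= 1.
Proof.
  intros Hy. unfold cheb. pose proof (cheb_pair_pell k y) as Pell. simpl in Pell.
  set (a := fst (cheb_pair k y)) in *. set (b := snd (cheb_pair k y)) in *.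
  assert (Hsq : (1 - y * y) * (a * a)
                = (a * a - 2 * y * a * b + b * b) - (b - y * a) * (b - y * a)) by ring.
  rewrite Pell in Hsq.
  assert (Ha : a * a <= 1).
  { apply (Rmult_le_reg_l (1 - y * y)); [nra|].
    pose proof (Rle_0_sqr (b - y * a)). unfold Rsqr in *. lra. }
  apply Rabs_le. nra.
Qed.

Lemma cheb_pair_opp k y :
  fst (cheb_pair k (- y)) = (-1) ^ k * fst (cheb_pair k y) /\
  snd (cheb_pair k (- y)) = (-1) ^ S k * snd (cheb_pair k y).
Proof.
  induction k as [|k [IH1 IH2]]; [simpl; split; ring|].
  rewrite !cheb_pair_fst_S, !cheb_pair_snd_S, IH1, IH2. simpl. split; ring.
Qed.

Lemma cheb_pair_right_of_1 e K : 0 <= e -> INR K * INR K * e <= 1 / 10 ->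
  forall j, (j + 1 <= K)%nat ->
  1 <= fst (cheb_pair j (1 + e)) <= 1 + 2 * INR j * (INR j + 1) * e /\
  0 <= snd (cheb_pair j (1 + e)) - fst (cheb_pair j (1 + e)) <= 4 * (INR j + 1) * e.
Proof.
  intros He HK. induction j as [|j IH]; intros Hj; [simpl; lra|].
  specialize (IH ltac:(lia)).
  rewrite cheb_pair_fst_S, cheb_pair_snd_S, S_INR.
  set (a := fst (cheb_pair j (1 + e))) in *. set (b := snd (cheb_pair j (1 + e))) in *.
  assert (Hj2 : INR j + 2 <= INR K).
  { replace (INR j + 2) with (INR (j + 2)) by (rewrite plus_INR; simpl; ring).
    apply le_INR. lia. }
  pose proof (pos_INR j).
  assert (Hb : b <= 1 + 2 * (INR j + 1) * (INR j + 2) * e) by nra.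
  assert ((INR j + 1) * (INR j + 2) * e <= INR K * INR K * e)
    by (apply Rmult_le_compat_r; nra).
  split; split; nra.
Qed.

Lemma cheb_right_of_1 K e : (1 <= K)%nat -> 0 <= e -> INR K * INR K * e <= 1 / 10 ->
  1 <= cheb K (1 + e) <= 2.
Proof.
  intros HK He HKe. destruct K as [|j]; [lia|].
  destruct (cheb_pair_right_of_1 e (S j) He HKe j ltac:(lia)) as [Hfst Hsnd].
  unfold cheb. rewrite cheb_pair_fst_S. rewrite S_INR in HKe.
  pose proof (pos_INR j).
  assert ((INR j + 1) * e <= (INR j + 1) * (INR j + 1) * e)
    by (apply Rmult_le_compat_r; nra).
  nra.
Qed.

Lemma cheb_abs_le2 K y : (1 <= K)%nat -> Rabs y <= 1 + 1 / (10 * INR K ^ 2) ->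
  Rabs (cheb K y) <= 2.
Proof.
  intros HK Hy.
  assert (HK1 : 1 <= INR K) by (apply (le_INR 1); lia).
  assert (Hright : forall z, 1 <= z <= 1 + 1 / (10 * INR K ^ 2) -> Rabs (cheb K z) <= 2).
  { intros z Hz. replace z with (1 + (z - 1)) by ring.
    assert (HKz : INR K * INR K * (z - 1) <= 1 / 10).
    { replace (1 / 10) with (INR K * INR K * (1 / (10 * INR K ^ 2))) by (field; lra).
      apply Rmult_le_compat_l; nra. }
    pose proof (cheb_right_of_1 K (z - 1) HK ltac:(lra) HKz). rewrite Rabs_right; lra. }
  destruct (Rlt_or_le (Rabs y) 1) as [Hlt|Hge].
  - apply Rabs_def2 in Hlt. pose proof (cheb_abs_le1 K y ltac:(lra)). lra.
  - destruct (Rle_or_lt 0 y).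
    + rewrite Rabs_right in Hge, Hy by lra. apply Hright; lra.
    + rewrite Rabs_left in Hge, Hy by lra.
      replace y with (- - y) by ring. unfold cheb.
      rewrite (proj1 (cheb_pair_opp K (- y))), Rabs_mult, pow_1_abs, Rmult_1_l.
      apply Hright; lra.
Qed.

Lemma sup_abs_on_le f a b M : a <= b ->
  (forall y, a <= y <= b -> Rabs (f y) <= M) -> sup_abs_on f a b <= M.
Proof.
  intros Hab Hf. unfold sup_abs_on.
  assert (HM : 0 <= M) by (eapply Rle_trans; [apply Rabs_pos | apply (Hf a); lra]).
  destruct (Lub_Rbar_correct (fun z => exists y, a <= y <= b /\ z = Rabs (f y)))
    as [_ Hlub].
  assert (Hle : Rbar_le (Lub_Rbar (fun z => exists y, a <= y <= b /\ z = Rabs (f y)))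
                        (Finite M)).
  { apply Hlub. intros z [y [Hy ->]]. now apply Hf. }
  destruct (Lub_Rbar _); simpl in *; easy.
Qed.

Lemma abs_le_sup_abs_on f a b y : a <= b -> (forall x, continuous f x) ->
  a <= y <= b -> Rabs (f y) <= sup_abs_on f a b.
Proof.
  intros Hab Hf Hy. unfold sup_abs_on.
  destruct (continuity_ab_maj (fun x => Rabs (f x)) a b Hab) as [m [Hm _]].
  { intros x _. apply (continuity_pt_comp f Rabs); [|apply Rcontinuity_abs].
    apply continuity_pt_filterlim, Hf. }
  destruct (Lub_Rbar_correct (fun z => exists y, a <= y <= b /\ z = Rabs (f y)))
    as [Hub Hlub].
  assert (Hle : Rbar_le (Lub_Rbar (fun z => exists y, a <= y <= b /\ z = Rabs (f y)))
                        (Finite (Rabs (f m)))).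
  { apply Hlub. intros z [x [Hx ->]]. now apply Hm. }
  specialize (Hub (Rabs (f y)) (ex_intro _ y (conj Hy eq_refl))).
  destruct (Lub_Rbar _); simpl in *; easy.
Qed.

Lemma sup_abs_on_cheb_le2 K Rb : (1 <= K)%nat -> 0 <= Rb ->
  Rb <= 1 + 1 / (10 * INR K ^ 2) -> sup_abs_on (cheb K) (- Rb) Rb <= 2.
Proof.
  intros HK HRb HRbK. apply sup_abs_on_le; [lra|]. intros y Hy.
  apply cheb_abs_le2; [exact HK|]. apply Rabs_le in Hy. lra.
Qed.

Lemma Rabs_sqr_sub_le u E δ : 0 <= E <= 1 -> Rabs (u - E) <= δ -> δ <= 1 ->
  Rabs (u ^ 2 - E ^ 2) <= 3 * δ.
Proof.
  intros HE Hu Hδ. apply Rabs_le_between in Hu. apply Rabs_le. nra.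
Qed.

Lemma poly_continuous (a : nat -> R) n x :
  continuous (fun t => sum_f_R0 (fun i => a i * t ^ i) n) x.
Proof.
  apply (ex_derive_continuous (K := R_AbsRing) (V := R_NormedModule)).
  induction n as [|n IH]; simpl; [auto_derive; easy|].
  apply (ex_derive_plus (fun t => sum_f_R0 (fun i => a i * t ^ i) n)); [exact IH|].
  auto_derive. easy.
Qed.

Lemma is_s_continuous b δ s x : is_s b δ s -> continuous s x.
Proof.
  intros [[a [_ Ha]] _].
  eapply continuous_ext; [intros t; symmetry; apply Ha | apply poly_continuous].
Qed.

Section Kernels.

Variables (σ : R) (s : R -> R).
Hypothesis σ_gt0 : 0 < σ.

Lemma kernel_scale_gt0 : 0 < 1 / (sqrt (2 * PI) * σ).
Proof.
  assert (0 < sqrt (2 * PI)) by (apply sqrt_lt_R0; pose proof PI_RGT_0; lra).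
  apply Rdiv_lt_0_compat; nra.
Qed.

Lemma Kr_continuous x y : (forall t, continuous s t) -> continuous (Kr σ s x) y.
Proof.
  intros Hs. unfold Kr.
  apply (continuous_mult (fun _ => 1 / (sqrt (2 * PI) * σ))); [apply continuous_const|].
  apply (continuous_comp (fun y => s ((x - y) ^ 2 / (4 * σ ^ 2))) (fun u => u ^ 2)).
  - apply (continuous_comp (fun y => (x - y) ^ 2 / (4 * σ ^ 2)) s); [|apply Hs].
    apply (ex_derive_continuous (K := R_AbsRing) (V := R_NormedModule)).
    auto_derive. lra.
  - apply (ex_derive_continuous (K := R_AbsRing) (V := R_NormedModule)). auto_derive. easy.
Qed.

Lemma KG_continuous x y : continuous (KG σ x) y.
Proof.
  apply (ex_derive_continuous (K := R_AbsRing) (V := R_NormedModule)).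
  unfold KG. auto_derive. easy.
Qed.

Lemma Kr_sub_KG_abs_le δ b Rb x y :
  (Rb + 1) ^ 2 / (4 * σ ^ 2) <= b -> δ <= 1 ->
  (forall t, 0 <= t <= b -> Rabs (exp (- t) - s t) <= δ) ->
  -1 <= x <= 1 -> - Rb <= y <= Rb ->
  Rabs (Kr σ s x y - KG σ x y) <= 3 * δ / (sqrt (2 * PI) * σ).
Proof.
  intros Hb Hδ Hs Hx Hy.
  set (t := (x - y) ^ 2 / (4 * σ ^ 2)).
  assert (Hσ2 : 0 < 4 * σ ^ 2) by nra.
  assert (Ht : 0 <= t <= b).
  { split; [apply Rdiv_le_0_compat; [apply pow2_ge_0 | lra]|].
    eapply Rle_trans; [|exact Hb]. apply Rmult_le_compat_r; [|nra].
    left. now apply Rinv_0_lt_compat. }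
  assert (HE : 0 <= exp (- t) <= 1).
  { split; [apply Rlt_le, exp_pos|]. rewrite <- exp_0.
    destruct (Rle_lt_or_eq_dec 0 t (proj1 Ht)) as [Hpos | <-].
    - left. apply exp_increasing. lra.
    - rewrite Ropp_0. lra. }
  assert (Hgauss : exp (- ((x - y) ^ 2 / (2 * σ ^ 2))) = exp (- t) ^ 2).
  { replace (exp (- t) ^ 2) with (exp (- t) * exp (- t)) by ring.
    rewrite <- exp_plus. f_equal. unfold t. field. lra. }
  unfold Kr, KG. fold t. rewrite Hgauss.
  pose proof kernel_scale_gt0 as Hc.
  replace (3 * δ / (sqrt (2 * PI) * σ)) with (1 / (sqrt (2 * PI) * σ) * (3 * δ))
    by (unfold Rdiv; ring).
  rewrite <- Rmult_minus_distr_l, Rabs_mult, (Rabs_right _ (Rle_ge _ _ (Rlt_le _ _ Hc))).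
  apply Rmult_le_compat_l; [lra|].
  apply Rabs_sqr_sub_le; [exact HE | rewrite Rabs_minus_sym; now apply Hs | exact Hδ].
Qed.

Lemma opKr_sub_opKG_supnorm_le δ b Rb f : δ <= 1 -> 0 <= Rb ->
  (Rb + 1) ^ 2 / (4 * σ ^ 2) <= b -> is_s b δ s -> (forall y, continuous f y) ->
  supnorm (fun x => opKr σ s Rb f x - opKG σ Rb f x)
    <= 2 * Rb * (3 * δ / (sqrt (2 * PI) * σ)) * sup_abs_on f (- Rb) Rb.
Proof.
  intros Hδ HRb Hb Hs Hf.
  assert (Hs_cont : forall t, continuous s t) by (intros; eapply is_s_continuous, Hs).
  apply sup_abs_on_le; [lra|]. intros x Hx.
  assert (HKr : ex_RInt (fun y => Kr σ s x y * f y) (- Rb) Rb).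
  { apply (ex_RInt_continuous (V := R_CompleteNormedModule)). intros y _.
    apply (continuous_mult (Kr σ s x)); [now apply Kr_continuous | apply Hf]. }
  assert (HKG : ex_RInt (fun y => KG σ x y * f y) (- Rb) Rb).
  { apply (ex_RInt_continuous (V := R_CompleteNormedModule)). intros y _.
    apply (continuous_mult (KG σ x)); [apply KG_continuous | apply Hf]. }
  unfold opKr, opKG.
  change (RInt (fun y => Kr σ s x y * f y) (- Rb) Rb - RInt (fun y => KG σ x y * f y) (- Rb) Rb)
    with (minus (RInt (fun y => Kr σ s x y * f y) (- Rb) Rb)
                (RInt (fun y => KG σ x y * f y) (- Rb) Rb)).
  rewrite <- (RInt_minus _ _ _ _ HKr HKG).
  replace (2 * Rb * (3 * δ / (sqrt (2 * PI) * σ)) * sup_abs_on f (- Rb) Rb)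
    with ((Rb - - Rb) * (3 * δ / (sqrt (2 * PI) * σ) * sup_abs_on f (- Rb) Rb)) by ring.
  apply abs_RInt_le_const; [lra | now apply ex_RInt_minus|].
  intros y Hy. change (minus ?u ?v) with (u - v).
  rewrite <- Rmult_minus_distr_r, Rabs_mult.
  apply Rmult_le_compat; try apply Rabs_pos.
  - apply (Kr_sub_KG_abs_le δ b Rb); try lra. exact (proj2 Hs).
  - apply abs_le_sup_abs_on; [lra | exact Hf | lra].
Qed.

End Kernels.

Lemma delt_pos_le1 r : (2 <= r)%nat -> 0 < delt r <= 1.
Proof.
  intros Hr.
  assert (Hln : 0 < ln (INR r))
    by (rewrite <- ln_1; apply ln_increasing; [lra | apply (lt_INR 1); lia]).
  unfold delt, Rpower. split; [apply exp_pos|].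
  rewrite <- exp_0. left. apply exp_increasing. nra.
Qed.

Lemma sigm_pos r : (2 <= r)%nat -> 0 < sigm r.
Proof.
  intros Hr. pose proof (delt_pos_le1 r Hr) as [Hδ0 _].
  assert (Hln : 0 < ln (INR r))
    by (rewrite <- ln_1; apply ln_increasing; [lra | apply (lt_INR 1); lia]).
  unfold sigm. apply Rdiv_lt_0_compat; [|apply (lt_INR 0); lia].
  apply sqrt_lt_R0. unfold delt, Rpower.
  rewrite Rdiv_1_l, <- exp_Ropp, ln_exp. nra.
Qed.

Lemma Rbd_ge1 d r : (2 <= r)%nat -> 1 <= Rbd d r.
Proof.
  intros Hr. pose proof (sigm_pos r Hr). unfold Rbd.
  pose proof (sqrt_pos (5 / 2 * ln (INR r))). pose proof (sqrt_pos 2).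
  pose proof (sqrt_pos (INR d)). fold (gam r) in *.
  assert (0 <= gam r * (2 + sqrt 2) * sqrt (INR d))
    by (repeat apply Rmult_le_pos; lra).
  nra.
Qed.

Theorem lemma13 (d r k : nat) (s : R -> R) :
  (2 <= r)%nat ->
  is_s (bpar d r) (delt r) s ->
  supnorm (fun x => opKr (sigm r) s (Rbd d r) (cheb k) x
                    - opKG (sigm r) (Rbd d r) (cheb k) x)
    <= 2 * Rbd d r * (3 * delt r / (sqrt (2 * PI) * sigm r))
       * sup_abs_on (cheb k) (- Rbd d r) (Rbd d r)
  /\
  ((1 <= k)%nat -> Rbd d r <= 1 + 1 / (10 * INR k ^ 2) ->
   supnorm (fun x => opKr (sigm r) s (Rbd d r) (cheb k) x
                     - opKG (sigm r) (Rbd d r) (cheb k) x)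
     <= 24 * delt r / (sqrt (2 * PI) * sigm r)).
Proof.
  intros Hr Hs.
  pose proof (delt_pos_le1 r Hr) as Hδ. pose proof (sigm_pos r Hr) as Hσ.
  pose proof (Rbd_ge1 d r Hr) as HR.
  assert (Hbound := opKr_sub_opKG_supnorm_le (sigm r) s Hσ (delt r) (bpar d r) (Rbd d r)
                      (cheb k) (proj2 Hδ) ltac:(lra) (Rle_refl _) Hs (cheb_continuous k)).
  split; [exact Hbound|].
  intros Hk HRk.
  pose proof (sup_abs_on_cheb_le2 k (Rbd d r) Hk ltac:(lra) HRk) as Hcheb.
  assert (Hk10 : 1 / (10 * INR k ^ 2) <= 1 / 10).
  { assert (1 <= INR k) by (apply (le_INR 1); lia).
    apply Rmult_le_compat_l; [lra|].
    apply Rinv_le_contravar; simpl; nra. }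
  pose proof (kernel_scale_gt0 (sigm r) Hσ) as Hc.
  set (c := 1 / (sqrt (2 * PI) * sigm r)) in Hc.
  replace (3 * delt r / (sqrt (2 * PI) * sigm r)) with (3 * delt r * c) in Hbound
    by (unfold c, Rdiv; ring).
  replace (24 * delt r / (sqrt (2 * PI) * sigm r)) with (24 * delt r * c)
    by (unfold c, Rdiv; ring).
  eapply Rle_trans; [exact Hbound|].
  assert (0 <= delt r * c) by nra.
  apply Rle_trans with (2 * Rbd d r * (3 * delt r * c) * 2);
    [apply Rmult_le_compat_l; [nra | exact Hcheb] | nra].
Qed.
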